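(* Let $g>0$, $\varepsilon>0$, $\lambda_0>0$, $\nu_0>0$ be constants. For each $N\ge 1$ define the constants $\Gamma^N,\Phi^N,\Omega^N,\Lambda^N$ and the maps $A^N,S^N$ as in the context below. Then for every $N\ge 2$ the reduced shallow water moment system of order $N$, $\partial_tU+A^N(U)\partial_xU=S^N(U)$ with $U=(h,hu_m)$, is identical to that of order $2$: that is, $A^N(U)=A^2(U)$ and $S^N(U)=S^2(U)$ for all $h>0$, $u_m\in\mathbb{R}$ (equivalently, $\Gamma^N=\Gamma^2$, $\Phi^N=\Phi^2$, $\Omega^N=\Omega^2$ and $\Lambda^N=\Lambda^2$).
   Context: Let $\phi_j(\zeta)=\frac{1}{j!}\frac{\mathrm{d}^j}{\mathrm{d}\zeta^j}(\zeta-\zeta^2)^j$ (scaled Legendre polynomials on $[0,1]$). For $N\ge1$ let $\boldsymbol{C}_N\in\mathbb{R}^{N\times N}$ have entries $C_{ij}=\int_0^1\phi_i'(\zeta)\phi_j'(\zeta)\,\mathrm{d}\zeta$, and let $\widetilde{\boldsymbol{C}}_N$ have entries $(\widetilde{\boldsymbol{C}}_N)_{ij}=(2i+1)C_{ij}$, $i,j=1,\dots,N$; $\boldsymbol{C}_N$ (hence $\widetilde{\boldsymbol{C}}_N$) is invertible. Define, for $i=1,\dots,N$, $\widetilde B_i^{(N)}=\sum_{j=1}^N(\boldsymbol{C}_N^{-1})_{ij}$, $\widetilde F_i^{(N)}=\sum_{j=1}^N(\widetilde{\boldsymbol{C}}_N^{-1}\boldsymbol{C}_N^{-1})_{ij}$,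 $\widetilde D_i^{(N)}=-\sum_{j=1}^N(\widetilde{\boldsymbol{C}}_N^{-1}\boldsymbol{C}_N^{-1})_{ij}+\Big(\sum_{k,l=1}^N(\boldsymbol{C}_N^{-1})_{kl}\Big)\Big(\sum_{j=1}^N(\boldsymbol{C}_N^{-1})_{ij}\Big)$, and $\Gamma^N=\sum_{j=1}^N\frac{(\widetilde B_j^{(N)})^2}{2j+1}$, $\Phi^N=\sum_{j=1}^N\widetilde F_j^{(N)}$, $\Omega^N=\sum_{j=1}^N\widetilde B_j^{(N)}$, $\Lambda^N=\sum_{j=1}^N\widetilde D_j^{(N)}$. For $U=(h,hu_m)$ with $h>0$, $u_m\in\mathbb{R}$, set \[A^N(U)=\begin{pmatrix}0&1\\ -u_m^2\big(1-\frac{\varepsilon^2h^2}{\lambda_0^2}\Gamma^N\big)+gh\big(1-\frac{\varepsilon^2h^2}{\lambda_0\nu_0}\Phi^N\big) & 2u_m\big(1+\frac{\varepsilon^2h^2}{\lambda_0^2}\Gamma^N\big)\end{pmatrix},\] \[S^N(U)=\begin{pmatrix}0\\ -\frac{\nu_0}{\lambda_0}u_m\big(1-\frac{\varepsilon}{\lambda_0}\Omega^Nh+\frac{\varepsilon^2}{\lambda_0^2}\Lambda^Nh^2\big)\end{pmatrix}.\] The system $\partial_tU+A^N(U)\partial_xU=S^N(U)$ is called the reduced shallow water moment equations (RSWME) of order $N$. *)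

From HB Require Import structures.
From mathcomp Require Import all_boot all_order all_algebra.
From mathcomp Require Import all_classical all_reals all_analysis.
Set Implicit Arguments. Unset Strict Implicit. Unset Printing Implicit Defensive.
Import Order.TTheory GRing.Theory Num.Theory.
Local Open Scope ring_scope.
Local Open Scope classical_set_scope.

Section RSWME.
Variable R : realType.

Definition phi (j : nat) : {poly R} :=
  (j`!%:R)^-1 *: ((('X - 'X^2) ^+ j)^`(j)).

(* C_N, indices i : 'I_N stand for i.+1 in 1..N *)
Definition Cmat (N : nat) : 'M[R]_N :=
  \matrix_(i < N, j < N)
    Rintegral lebesgue_measure `[0, 1]
      (fun z : R => ((phi i.+1)^`()).[z] * ((phi j.+1)^`()).[z]).

Definition Ctmat (N : nat) : 'M[R]_N :=
  \matrix_(i < N, j < N) ((2 * i.+1 + 1)%:R * Cmat N i j).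

Definition Btil (N : nat) (i : 'I_N) : R := \sum_(j < N) invmx (Cmat N) i j.

Definition Ftil (N : nat) (i : 'I_N) : R :=
  \sum_(j < N) (invmx (Ctmat N) *m invmx (Cmat N)) i j.

Definition Dtil (N : nat) (i : 'I_N) : R :=
  - (\sum_(j < N) (invmx (Ctmat N) *m invmx (Cmat N)) i j)
  + (\sum_(k < N) \sum_(l < N) invmx (Cmat N) k l) *
    (\sum_(j < N) invmx (Cmat N) i j).

Definition GammaN (N : nat) : R :=
  \sum_(j < N) (Btil j ^+ 2) / (2 * j.+1 + 1)%:R.
Definition PhiN (N : nat) : R := \sum_(j < N) Ftil j.
Definition OmegaN (N : nat) : R := \sum_(j < N) Btil j.
Definition LambdaN (N : nat) : R := \sum_(j < N) Dtil j.

Definition AN (N : nat) (g eps lam0 nu0 h um : R) : 'M[R]_2 :=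
  \matrix_(i < 2, j < 2)
    if (i : nat) == 0%N then (if (j : nat) == 0%N then 0 else 1)
    else if (j : nat) == 0%N then
      - um ^+ 2 * (1 - eps ^+ 2 * h ^+ 2 / lam0 ^+ 2 * GammaN N)
      + g * h * (1 - eps ^+ 2 * h ^+ 2 / (lam0 * nu0) * PhiN N)
    else 2 * um * (1 + eps ^+ 2 * h ^+ 2 / lam0 ^+ 2 * GammaN N).

Definition SN (N : nat) (g eps lam0 nu0 h um : R) : 'cV[R]_2 :=
  \col_(i < 2)
    if (i : nat) == 0%N then 0
    else - (nu0 / lam0) * um *
      (1 - eps / lam0 * OmegaN N * h + eps ^+ 2 / lam0 ^+ 2 * LambdaN N * h ^+ 2).

End RSWME.

From HB Require Import structures.
From mathcomp Require Import all_boot all_order all_algebra.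
From mathcomp Require Import all_classical all_reals all_analysis.
From mathcomp Require Import polyorder cauchyreals.
From mathcomp Require Import ring lra.
Set Implicit Arguments. Unset Strict Implicit. Unset Printing Implicit Defensive.
Import Order.TTheory GRing.Theory Num.Theory.
Import numFieldNormedType.Exports.
Local Open Scope ring_scope.

(* C_N is the Gram matrix of phi_1', ..., phi_N' in L^2(0, 1); these
   polynomials have degrees 0, ..., N - 1, so C_N is invertible.  Since
   phi_j(0) = 1, phi_j(1) = (-1)^j and phi_j (j >= 1) has zero mean,
   integrating by parts against phi_1' = -2 and phi_2' = 12 x - 6 gives the
   first two columns of C_N, 2 - 2 (-1)^i and 6 + 6 (-1)^i.  Hence for N >= 2
   the vector B = C_N^-1 1 is (1/4, 1/12, 0, ..., 0) whatever N is.  As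
   C~_N = diag(2i+1) C_N with C_N symmetric, Phi^N = B^T diag(2i+1)^-1 B is
   Gamma^N, and Lambda^N = (Omega^N)^2 - Phi^N; so Omega^N = 1/3,
   Gamma^N = Phi^N = 1/45 and Lambda^N = 4/45 for every N >= 2. *)

Section Rodrigues.
Variable R : comNzRingType.

Definition rodrigues (j : nat) : {poly R} := ('X - 'X^2) ^+ j.

Lemma derivn_comp_1subX (p : {poly R}) k :
  (p \Po (1 - 'X))^`(k) = (-1) ^+ k *: (p^`(k) \Po (1 - 'X)).
Proof.
elim: k => [|k IH]; first by rewrite !derivn0 expr0 scale1r.
rewrite derivnS IH derivZ deriv_comp derivB derivC derivX sub0r -derivnS.
by rewrite mulrN1 exprS mulN1r scaleNr scalerN.
Qed.

Lemma rodrigues_comp_1subX j : rodrigues j \Po (1 - 'X) = rodrigues j.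
Proof.
rewrite /rodrigues rmorphXn /= comp_polyB comp_polyX comp_Xn_poly.
by congr (_ ^+ _); ring.
Qed.

Lemma horner1_derivn_rodrigues j k :
  (rodrigues j)^`(k).[1] = (-1) ^+ k * (rodrigues j)^`(k).[0].
Proof.
rewrite -{1}rodrigues_comp_1subX derivn_comp_1subX hornerZ horner_comp.
by rewrite !hornerE subrr.
Qed.

Lemma horner0_derivn_rodrigues j k : (k <= j)%N ->
  (rodrigues j)^`(k).[0] = if k == j then j`!%:R else 0.
Proof.
have -> : rodrigues j = 'X^j * (1 - 'X) ^+ j.
  by rewrite /rodrigues -exprMn; congr (_ ^+ _); ring.
move=> kj; rewrite horner_coef0 coef_derivn addn0 coefXnM.
case: ltngtP kj => // [kj _|->]; first by rewrite mul0rn.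
by rewrite subnn -horner_coef0 horner_exp !hornerE subr0 expr1n ffactnn.
Qed.

End Rodrigues.

Lemma size_rodrigues (R : idomainType) j : size (rodrigues R j) = (j.*2).+1.
Proof.
have sX : size ('X - 'X^2 : {poly R}) = 3.
  by rewrite addrC size_polyDl ?size_polyN ?size_polyXn ?size_polyX.
rewrite /rodrigues -[LHS]prednK ?size_exp ?sX ?mul2n // lt0n size_poly_eq0.
by rewrite expf_neq0 // -size_poly_eq0 sX.
Qed.

Lemma natr_fact_neq0 (R : numDomainType) j : j`!%:R != 0 :> R.
Proof. by rewrite pnatr_eq0 -lt0n fact_gt0. Qed.

Lemma free_polys_of_size (R : idomainType) (p : nat -> {poly R}) n (c : 'I_n -> R) :
  (forall i, size (p i) = i.+1) -> \sum_i c i *: p i = 0 -> forall i, c i = 0.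
Proof.
move=> size_p; elim: n c => [|n IH] c; first by move=> _ [].
rewrite big_ord_recr /= => sum0.
have c_max : c ord_max = 0.
  move/polyP/(_ n): sum0; rewrite coefD coef_sum big1 => [|i _]; last first.
    by rewrite coefZ nth_default ?mulr0 // size_p.
  rewrite add0r coefZ coef0 => /eqP; rewrite mulf_eq0 => /orP[/eqP //|].
  have -> : (p n)`_n = lead_coef (p n) by rewrite lead_coefE size_p.
  by rewrite lead_coef_eq0 -size_poly_eq0 size_p.
move: sum0; rewrite c_max scale0r addr0 => /IH c_lt i.
have [i_lt_n|i_ge_n] := ltnP i n.
  by rewrite -(c_lt (Ordinal i_lt_n)); congr c; exact: val_inj.
by rewrite -c_max; congr c; apply/val_inj/eqP; rewrite eqn_leq -ltnS ltn_ord.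
Qed.

Section Antiderivative.
Variable R : numFieldType.

Definition antideriv (p : {poly R}) : {poly R} :=
  \poly_(i < (size p).+1) (if i is k.+1 then p`_k / k.+1%:R else 0).

Lemma deriv_antideriv p : (antideriv p)^`() = p.
Proof.
apply/polyP => i; rewrite coef_deriv coef_poly ltnS.
case: ltnP => [_|le_p_i].
  by rewrite -[_ / _ *+ _]mulr_natr divfK // pnatr_eq0.
by rewrite mul0rn nth_default.
Qed.

Lemma poly_itv_eq0 (p : {poly R}) a b : a < b ->
  (forall x, a < x < b -> p.[x] = 0) -> p = 0.
Proof.
move=> ab p0; have ba_gt0 : 0 < b - a by rewrite subr_gt0.
pose x k := a + (b - a) / k.+2%:R.
apply: (@roots_geq_poly_eq0 _ p [seq x k | k <- iota 0 (size p)]).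
- apply/allP => _ /mapP[k _ ->]; apply/eqP/p0.
  rewrite ltrDl divr_gt0 ?ltr0n //= -ltrBrDl ltr_pdivrMr ?ltr0n //.
  by rewrite ltr_pMr // ltr1n.
- rewrite map_inj_uniq ?iota_uniq // => k l /addrI/(mulfI (lt0r_neq0 ba_gt0)).
  by move/invr_inj/eqP; rewrite eqr_nat => /eqP[].
- by rewrite size_map size_iota.
Qed.

End Antiderivative.

Section PolyIntegral.
Variable R : realType.
Notation mu := (@lebesgue_measure R).
Implicit Types (p q : {poly R}) (a b : R).

Lemma horner_integrable p a b : mu.-integrable `[a, b] (EFin \o horner p).
Proof.
apply: continuous_compact_integrable; first exact: segment_compact.
by apply/continuous_subspaceT => x; exact: continuous_horner.
Qed.

Lemma Rintegral_hornerD p q a b :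
  \int[mu]_(x in `[a, b]) (p + q).[x] =
  \int[mu]_(x in `[a, b]) p.[x] + \int[mu]_(x in `[a, b]) q.[x].
Proof.
under eq_Rintegral do rewrite hornerD.
by apply: RintegralD => //; exact: horner_integrable.
Qed.

Lemma Rintegral_hornerZ c p a b :
  \int[mu]_(x in `[a, b]) (c *: p).[x] = c * \int[mu]_(x in `[a, b]) p.[x].
Proof.
under eq_Rintegral do rewrite hornerZ.
by apply: RintegralZl => //; exact: horner_integrable.
Qed.

Lemma Rintegral_horner0 a b : \int[mu]_(x in `[a, b]) (0 : {poly R}).[x] = 0.
Proof. by rewrite -(scale0r 0) Rintegral_hornerZ mul0r. Qed.

Lemma Rintegral_horner_sum (I : Type) (r : seq I) (P : pred I)
    (F : I -> {poly R}) a b :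
  \int[mu]_(x in `[a, b]) (\sum_(i <- r | P i) F i).[x] =
  \sum_(i <- r | P i) \int[mu]_(x in `[a, b]) (F i).[x].
Proof.
apply: (big_morph (fun p => \int[mu]_(x in `[a, b]) p.[x])) => [p q|].
  exact: Rintegral_hornerD.
exact: Rintegral_horner0.
Qed.

Lemma Rintegral_horner_deriv p a b : a < b ->
  \int[mu]_(x in `[a, b]) (p^`()).[x] = p.[b] - p.[a].
Proof.
move=> ab; rewrite /Rintegral (@continuous_FTC2 R (horner p^`()) (horner p)) //.
- by apply/continuous_subspaceT => x; exact: continuous_horner.
- split.
  + by move=> x _; exact: derivable_horner.
  + exact/cvg_at_right_filter/continuous_horner.
  + exact/cvg_at_left_filter/continuous_horner.
- by move=> x _; rewrite derivE.
Qed.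

Lemma Rintegral_horner_by_parts p q a b : a < b ->
  \int[mu]_(x in `[a, b]) (p^`() * q).[x] =
  (p * q).[b] - (p * q).[a] - \int[mu]_(x in `[a, b]) (p * q^`()).[x].
Proof.
by move=> ab; rewrite -Rintegral_horner_deriv // derivM Rintegral_hornerD addrK.
Qed.

Lemma Rintegral_horner_sqr_eq0 q a b : a < b ->
  \int[mu]_(x in `[a, b]) (q * q).[x] = 0 -> q = 0.
Proof.
(* An antiderivative of q^2 is nondecreasing and takes the same value at a
   and b, so it is constant on ]a, b[ and q^2 = 0. *)
move=> ab int0; set Q := antideriv (q * q).
have Q_mono c d : c < d -> Q.[c] <= Q.[d].
  move=> cd; rewrite -subr_ge0 -Rintegral_horner_deriv // deriv_antideriv.
  by apply: Rintegral_ge0 => x _; rewrite hornerM -expr2 sqr_ge0.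
have Q_const x : a < x < b -> (Q - Q.[a]%:P).[x] = 0.
  move=> /andP[ax xb]; rewrite !hornerE.
  move: int0 (Q_mono _ _ ax) (Q_mono _ _ xb).
  rewrite -{1}(deriv_antideriv (q * q)) Rintegral_horner_deriv // -/Q; lra.
have := congr1 deriv (poly_itv_eq0 ab Q_const).
rewrite derivB derivC subr0 deriv_antideriv deriv0 => /eqP.
by rewrite mulf_eq0 orbb => /eqP.
Qed.

End PolyIntegral.

Section Gram.
Variable R : realType.
Notation mu := (@lebesgue_measure R).
Variables (a b : R) (n : nat) (p : nat -> {poly R}).

Definition gram_mx : 'M[R]_n :=
  \matrix_(i, j) \int[mu]_(x in `[a, b]) ((p i).[x] * (p j).[x]).

Lemma tr_gram_mx : gram_mx^T = gram_mx.
Proof.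
by apply/matrixP => i j; rewrite !mxE; under eq_Rintegral do rewrite mulrC.
Qed.

Lemma gram_quadratic_form (v : 'rV[R]_n) :
  (v *m gram_mx *m v^T) 0 0 =
  \int[mu]_(x in `[a, b]) ((\sum_i v 0 i *: p i) * (\sum_i v 0 i *: p i)).[x].
Proof.
rewrite mulr_suml Rintegral_horner_sum mxE.
under eq_bigr do rewrite !mxE mulr_suml.
rewrite exchange_big; apply: eq_bigr => i _.
rewrite mulr_sumr Rintegral_horner_sum; apply: eq_bigr => j _.
have -> : v 0 i *: p i * (v 0 j *: p j) = (v 0 i * v 0 j) *: (p i * p j).
  by rewrite -scalerAr -scalerAl scalerA mulrC.
rewrite Rintegral_hornerZ mxE.
by under [in RHS]eq_Rintegral do rewrite hornerM; rewrite mulrAC.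
Qed.

Lemma gram_mx_unit : a < b ->
  (forall c : 'I_n -> R, \sum_i c i *: p i = 0 -> forall i, c i = 0) ->
  gram_mx \in unitmx.
Proof.
move=> ab p_free; rewrite unitmxE unitfE; apply/negP => /det0P[v v_neq0 v_ker].
have q0 : \sum_i v 0 i *: p i = 0.
  apply: Rintegral_horner_sqr_eq0 ab _.
  by rewrite -gram_quadratic_form v_ker mul0mx mxE.
by apply/negP: v_neq0; apply/negPn/eqP/rowP => i; rewrite mxE (p_free _ q0).
Qed.

End Gram.

Section ScaledLegendre.
Variable R : realType.
Notation mu := (@lebesgue_measure R).

Lemma phiE j : phi R j = (j`!%:R)^-1 *: (rodrigues R j)^`(j).
Proof. by []. Qed.

Lemma phi_nderivn j : phi R j = (rodrigues R j)^`N(j).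
Proof.
rewrite phiE nderivn_def -scalerMnr scalerMnl -mulr_natr.
by rewrite mulVf ?scale1r ?natr_fact_neq0.
Qed.

Lemma phi_horner0 j : (phi R j).[0] = 1.
Proof.
by rewrite phiE hornerZ horner0_derivn_rodrigues // eqxx mulVf ?natr_fact_neq0.
Qed.

Lemma phi_horner1 j : (phi R j).[1] = (-1) ^+ j.
Proof.
rewrite phiE hornerZ horner1_derivn_rodrigues horner0_derivn_rodrigues // eqxx.
by rewrite mulrCA mulVf ?mulr1 ?natr_fact_neq0.
Qed.

Lemma size_phi j : size (phi R j) = j.+1.
Proof.
rewrite phiE size_scale ?invr_eq0 ?natr_fact_neq0 // size_derivn size_rodrigues.
by rewrite -addnn -addSn addnK.
Qed.

Lemma size_deriv_phi j : size ((phi R j.+1)^`()) = j.+1.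
Proof. by rewrite size_deriv size_phi. Qed.

Lemma Rintegral_phi j : \int[mu]_(x in `[0, 1]) (phi R j.+1).[x] = 0.
Proof.
have -> : phi R j.+1 = ((j.+1`!%:R)^-1 *: (rodrigues R j.+1)^`(j))^`().
  by rewrite phiE derivZ -derivnS.
rewrite Rintegral_horner_deriv ?ltr01 // !hornerZ horner1_derivn_rodrigues.
by rewrite horner0_derivn_rodrigues // ltn_eqF // !mulr0 subr0.
Qed.

Lemma deriv_phi1 : (phi R 1)^`() = (-2)%:P.
Proof.
rewrite phi_nderivn /rodrigues expr1 nderivn1.
rewrite !(derivB, derivX, derivXn, derivMn) /=.
by rewrite -{1}polyC1 derivC sub0r polyCN polyC_natr.
Qed.

Lemma deriv_phi2 : (phi R 2)^`() = 12%:P * 'X - 6%:P.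
Proof.
rewrite phi_nderivn (_ : rodrigues R 2 = 'X^2 - 'X^3 *+ 2 + 'X^4); last first.
  by rewrite /rodrigues; ring.
rewrite !(nderivnD, nderivnB, nderivnMn, nderivnMNn, nderivnXn) /=.
rewrite !(derivD, derivB, derivMn, derivMNn, derivXn) /= !polyC_natr.
by rewrite !subSS !subn0 binn; ring.
Qed.

End ScaledLegendre.

Section StiffnessMatrix.
Variable R : realType.
Notation mu := (@lebesgue_measure R).

Lemma Cmat_gram N : Cmat R N = gram_mx 0 1 N (fun i => (phi R i.+1)^`()).
Proof. by []. Qed.

Lemma Cmat_unit N : Cmat R N \in unitmx.
Proof.
rewrite Cmat_gram gram_mx_unit ?ltr01 // => c.
exact/(@free_polys_of_size _ (fun i => (phi R i.+1)^`()))/size_deriv_phi.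
Qed.

Lemma tr_Cmat N : (Cmat R N)^T = Cmat R N.
Proof. by rewrite Cmat_gram tr_gram_mx. Qed.

Definition weight_mx N : 'M[R]_N := diag_mx (\row_(i < N) (2 * i.+1 + 1)%:R).

Lemma Ctmat_weight N : Ctmat R N = weight_mx N *m Cmat R N.
Proof. by apply/matrixP => i j; rewrite mul_diag_mx !mxE. Qed.

Lemma Ctmat_unit N : Ctmat R N \in unitmx.
Proof.
rewrite Ctmat_weight unitmx_mul Cmat_unit andbT unitmxE det_diag unitfE.
by apply/prodf_neq0 => i _; rewrite mxE pnatr_eq0 addn1.
Qed.

Lemma Cmat_horner N (i j : 'I_N) :
  Cmat R N i j =
  \int[mu]_(x in `[0, 1]) ((phi R i.+1)^`() * (phi R j.+1)^`()).[x].
Proof. by rewrite mxE; under [in RHS]eq_Rintegral do rewrite hornerM. Qed.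

Lemma Cmat_col0 N (i j : 'I_N) : j = 0%N :> nat ->
  Cmat R N i j = 2 - 2 * (-1) ^+ i.+1.
Proof.
move=> j0; rewrite Cmat_horner j0 Rintegral_horner_by_parts ?ltr01 //.
rewrite deriv_phi1 derivC mulr0 Rintegral_horner0.
by rewrite !hornerM phi_horner0 phi_horner1 !hornerC; ring.
Qed.

Lemma Cmat_col1 N (i j : 'I_N) : j = 1%N :> nat ->
  Cmat R N i j = 6 * (-1) ^+ i.+1 + 6.
Proof.
move=> j1; rewrite Cmat_horner j1 Rintegral_horner_by_parts ?ltr01 //.
rewrite deriv_phi2 derivB derivC subr0 derivM derivC derivX mul0r add0r mulr1.
rewrite [_ * 12%:P]mulrC [12%:P * phi _ _]mul_polyC Rintegral_hornerZ.
rewrite Rintegral_phi !(hornerM, hornerD, hornerN, hornerC, hornerX).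
by rewrite phi_horner0 phi_horner1; ring.
Qed.

End StiffnessMatrix.

Section MomentConstants.
Variable R : realType.
Local Notation ones N := (const_mx 1 : 'cV[R]_N).

Lemma sum_row_ones N (M : 'M[R]_N) i : \sum_j M i j = (M *m ones N) i 0.
Proof. by rewrite mxE; apply: eq_bigr => j _; rewrite mxE mulr1. Qed.

Lemma Btil_mx N (i : 'I_N) : Btil R i = (invmx (Cmat R N) *m ones N) i 0.
Proof. exact: sum_row_ones. Qed.

Lemma PhiN_GammaN N : PhiN R N = GammaN R N.
Proof.
(* Phi^N = 1^T Ct^-1 B = (C B)^T Ct^-1 B = B^T (C Ct^-1 B), and
   diag(2i+1) (C Ct^-1 B) = B. *)
set C := Cmat R N; set B := invmx C *m ones N.
set w := invmx (Ctmat R N) *m B.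
have CB : C *m B = ones N by rewrite mulKVmx ?Cmat_unit.
have Cw i : (C *m w) i 0 = B i 0 / (2 * i.+1 + 1)%:R.
  have : weight_mx R N *m (C *m w) = B.
    by rewrite mulmxA -Ctmat_weight mulKVmx ?Ctmat_unit.
  rewrite mul_diag_mx => /matrixP/(_ i 0); rewrite !mxE => <-.
  by rewrite mulrC mulKf // pnatr_eq0 addn1.
transitivity (((ones N)^T *m w) 0 0).
  rewrite mxE; apply: eq_bigr => i _.
  by rewrite /Ftil sum_row_ones -mulmxA !mxE mul1r.
rewrite -CB trmx_mul tr_Cmat -mulmxA mxE; apply: eq_bigr => i _.
by rewrite Cw mxE -Btil_mx expr2 mulrA.
Qed.

Lemma LambdaN_OmegaN_PhiN N : LambdaN R N = OmegaN R N ^+ 2 - PhiN R N.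
Proof. by rewrite /LambdaN /Dtil big_split /= sumrN -mulr_sumr addrC expr2. Qed.

Variable n : nat.

Definition Btil_closed : 'cV[R]_n.+2 :=
  \col_i (if i == 0 :> nat then 4^-1 else if i == 1 :> nat then 12^-1 else 0).

Lemma sum_Btil_closed (F : 'I_n.+2 -> R) :
  \sum_i Btil_closed i 0 * F i = 4^-1 * F ord0 + 12^-1 * F (lift ord0 ord0).
Proof.
rewrite 2!big_ord_recl big1 => [|i _]; last by rewrite mxE mul0r.
by rewrite !mxE addr0.
Qed.

Lemma Cmat_Btil_closed : Cmat R n.+2 *m Btil_closed = ones n.+2.
Proof.
apply/matrixP => i j; rewrite (ord1 j) [LHS]mxE [RHS]mxE.
under eq_bigr do rewrite mulrC.
by rewrite sum_Btil_closed Cmat_col0 // Cmat_col1 //; field.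
Qed.

Lemma Btil_closedE (i : 'I_n.+2) : Btil R i = Btil_closed i 0.
Proof. by rewrite Btil_mx -Cmat_Btil_closed mulKmx ?Cmat_unit. Qed.

Lemma OmegaN_closed : OmegaN R n.+2 = 3^-1.
Proof.
rewrite /OmegaN; under eq_bigr do rewrite Btil_closedE -[Btil_closed _ 0]mulr1.
by rewrite sum_Btil_closed; field.
Qed.

Lemma GammaN_closed : GammaN R n.+2 = 45^-1.
Proof.
rewrite /GammaN; under eq_bigr do rewrite Btil_closedE expr2 -mulrA.
rewrite sum_Btil_closed !mxE.
by rewrite [LHS](_ : _ = 4^-1 * (4^-1 / 3) + 12^-1 * (12^-1 / 5)) //; field.
Qed.

End MomentConstants.

Theorem theorem3 (R : realType) (g eps lam0 nu0 : R)
  (hg : 0 < g) (heps : 0 < eps) (hlam0 : 0 < lam0) (hnu0 : 0 < nu0)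
  (N : nat) (hN : (2 <= N)%N) (h um : R) (hh : 0 < h) :
  AN N g eps lam0 nu0 h um = AN 2 g eps lam0 nu0 h um /\
  SN N g eps lam0 nu0 h um = SN 2 g eps lam0 nu0 h um.
Proof.
case: N hN => [|[|n]] // _.
rewrite /AN /SN !LambdaN_OmegaN_PhiN !PhiN_GammaN.
by rewrite !OmegaN_closed !GammaN_closed.
Qed.
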